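(* Let $f:\mathbb{R}^d\to\mathbb{R}$ be $\beta$-smooth with minimum value $f^\star$. Then the iterates of AdaSGD (as in the context) satisfy $$\sum_{t=1}^T\nabla f(w_t)\cdot g_t\le\frac{\gamma\Delta_1}{\eta}+\Big(\frac{2\bar\Delta_T}{\eta}+\eta\beta\Big)\sqrt{\sum_{t=1}^T\|g_t\|^2},$$ where $\Delta_1=f(w_1)-f^\star$ and $\bar\Delta_T=\max_{t\le T}f(w_t)-f^\star$.
   Context: $\|\cdot\|$ is the Euclidean norm. $\beta$-smooth: $\|\nabla f(x)-\nabla f(y)\|\le\beta\|x-y\|$. AdaSGD with parameters $\eta,\gamma>0$: arbitrary $w_1\in\mathbb{R}^d$; for $t=1,\dots,T$, $g_t$ is the stochastic gradient returned by an oracle at $w_t$, $\eta_t=\eta/\sqrt{\gamma^2+\sum_{s=1}^t\|g_s\|^2}$, and $w_{t+1}=w_t-\eta_tg_t$. *)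

From HB Require Import structures.
From mathcomp Require Import all_boot all_order all_algebra.
From mathcomp Require Import all_classical all_reals all_analysis.
Set Implicit Arguments. Unset Strict Implicit. Unset Printing Implicit Defensive.
Import Order.TTheory GRing.Theory Num.Theory.
Import numFieldNormedType.Exports.
Local Open Scope ring_scope.

Definition dotp (R : realType) (d : nat) (u v : 'rV[R]_d) : R :=
  \sum_(i < d) u ord0 i * v ord0 i.

Definition enorm (R : realType) (d : nat) (v : 'rV[R]_d) : R :=
  Num.sqrt (dotp v v).

(* AdaSGD step size eta_t = eta / sqrt(gamma^2 + sum_{s=1}^t ||g_s||^2),
   for t >= 1; g is indexed from 1 (g 0 is never used). *)
Definition adasgd_step (R : realType) (d : nat) (eta gamma : R)
    (g : nat -> 'rV[R]_d) (t : nat) : R :=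
  eta / Num.sqrt (gamma ^+ 2 + \sum_(1 <= s < t.+1) enorm (g s) ^+ 2).

(* adasgd_iter k = w_{k+1}:  w_1 = w1,  w_{t+1} = w_t - eta_t g_t. *)
Fixpoint adasgd_iter (R : realType) (d : nat) (eta gamma : R)
    (w1 : 'rV[R]_d) (g : nat -> 'rV[R]_d) (k : nat) : 'rV[R]_d :=
  match k with
  | 0 => w1
  | k'.+1 => adasgd_iter eta gamma w1 g k'
             - adasgd_step eta gamma g k'.+1 *: g k'.+1
  end.

(* The AdaSGD iterate w_t (meaningful for t >= 1). *)
Definition adasgd_w (R : realType) (d : nat) (eta gamma : R)
    (w1 : 'rV[R]_d) (g : nat -> 'rV[R]_d) (t : nat) : 'rV[R]_d :=
  adasgd_iter eta gamma w1 g t.-1.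

(* Smoothness gives the descent inequality
     f (w_(t+1)) <= f (w_t) - eta_t <grad f (w_t), g_t> + beta / 2 eta_t^2 |g_t|^2.
   With eta_t = eta / S_t, S_t = sqrt (gamma^2 + G_t) and G_t = sum_(s <= t) |g_s|^2,
   divide by eta_t: the quadratic term becomes eta beta |g_t|^2 / (2 S_t), which is at
   most eta beta (sqrt G_t - sqrt G_(t-1)) and telescopes to eta beta sqrt G_T. The
   remaining sum of S_t (f (w_t) - f (w_(t+1))) / eta is handled by summation by parts:
   S is nondecreasing with S_0 = gamma, so it is at most
   (gamma Delta_1 + DeltaBar (S_T - gamma)) / eta, and S_T - gamma <= sqrt G_T. *)

From HB Require Import structures.
From mathcomp Require Import all_boot all_order all_algebra.
From mathcomp Require Import all_classical all_reals all_analysis.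
From mathcomp Require Import ring lra.
Import Order.TTheory GRing.Theory Num.Theory.
Import numFieldNormedType.Exports.
Set Implicit Arguments.
Unset Strict Implicit.
Unset Printing Implicit Defensive.

Local Open Scope ring_scope.

Section EuclideanSpace.
Variables (R : realType) (d : nat).
Implicit Types u v w : 'rV[R]_d.

Lemma dotpC u v : dotp u v = dotp v u.
Proof. by apply: eq_bigr => i _; rewrite mulrC. Qed.

Lemma dotpBl u w v : dotp (u - w) v = dotp u v - dotp w v.
Proof. by rewrite /dotp -sumrB; apply: eq_bigr => i _; rewrite !mxE mulrBl. Qed.

Lemma dotpZl (a : R) u v : dotp (a *: u) v = a * dotp u v.
Proof. by rewrite /dotp mulr_sumr; apply: eq_bigr => i _; rewrite !mxE mulrA. Qed.

Lemma dotpBr v u w : dotp v (u - w) = dotp v u - dotp v w.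
Proof. by rewrite dotpC dotpBl !(dotpC v). Qed.

Lemma dotpZr (a : R) v u : dotp v (a *: u) = a * dotp v u.
Proof. by rewrite dotpC dotpZl dotpC. Qed.

Lemma dotpp_ge0 u : 0 <= dotp u u.
Proof. by apply: sumr_ge0 => i _; rewrite -expr2 sqr_ge0. Qed.

Lemma dotp_eq0l u v : dotp u u = 0 -> dotp u v = 0.
Proof.
move=> /eqP; rewrite psumr_eq0 => [/allP u0|i _]; last by rewrite -expr2 sqr_ge0.
apply: big1 => i _.
by have := u0 i (mem_index_enum _); rewrite mulf_eq0 orbb => /eqP ->; rewrite mul0r.
Qed.

Lemma enorm_ge0 u : 0 <= enorm u.
Proof. exact: sqrtr_ge0. Qed.

Lemma enorm_sqr u : enorm u ^+ 2 = dotp u u.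
Proof. by rewrite sqr_sqrtr // dotpp_ge0. Qed.

Lemma enormZ (a : R) u : enorm (a *: u) = `|a| * enorm u.
Proof. by rewrite /enorm dotpZl dotpZr mulrA -expr2 sqrtrM ?sqr_ge0 // sqrtr_sqr. Qed.

(* Expand 0 <= |b u - a v|^2 with a = |u| and b = |v|. *)
Lemma cauchy_schwarz u v : dotp u v <= enorm u * enorm v.
Proof.
set a := enorm u; set b := enorm v.
have [a0 | a_neq0] := eqVneq a 0.
  by rewrite dotp_eq0l ?mulr_ge0 ?enorm_ge0 // -enorm_sqr -/a a0 expr0n.
have [b0 | b_neq0] := eqVneq b 0.
  by rewrite dotpC dotp_eq0l ?mulr_ge0 ?enorm_ge0 // -enorm_sqr -/b b0 expr0n.
have a_gt0 : 0 < a by rewrite lt_def a_neq0 enorm_ge0.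
have b_gt0 : 0 < b by rewrite lt_def b_neq0 enorm_ge0.
have := dotpp_ge0 (b *: u - a *: v).
rewrite !dotpBl !dotpBr !dotpZl !dotpZr (dotpC v u) -!enorm_sqr -/a -/b.
have ab_gt0 : 0 < a * b by rewrite mulr_gt0.
nra.
Qed.

End EuclideanSpace.

Lemma is_derive_along_line (R : realType) (V W : normedModType R) (f : V -> W)
    (x v : V) (s : R) (l : W) :
  is_derive (s *: v + x) v f l -> is_derive s 1 (fun r : R => f (r *: v + x)) l.
Proof.
move=> [fv <-].
set y := s *: v + x.
have quotE : (fun h : R => h^-1 *: (((fun r : R => f (r *: v + x)) \o shift s) (h *: 1) - f y))
    = (fun h : R => h^-1 *: ((f \o shift y) (h *: v) - f y)).
  by apply: funext => h /=; rewrite /y [h%:A]mulr1 scalerDl addrA.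
by split; rewrite /derivable /derive quotE.
Qed.

Section SmoothDescent.
Variables (R : realType) (d : nat) (f : 'rV[R]_d -> R) (gradf : 'rV[R]_d -> 'rV[R]_d).
Variable beta : R.
Hypothesis hgrad : forall x v : 'rV[R]_d, is_derive x v f (dotp (gradf x) v).
Hypothesis hsmooth : forall x y : 'rV[R]_d,
  enorm (gradf x - gradf y) <= beta * enorm (x - y).

Lemma smooth_coef_ge0 (v : 'rV[R]_d) : 0 <= beta * enorm v.
Proof. by have := hsmooth v 0; rewrite subr0; exact/le_trans/enorm_ge0. Qed.

Lemma dotp_gradB_le (x v : 'rV[R]_d) (r : R) : 0 <= r ->
  dotp (gradf (r *: v + x) - gradf x) v <= beta * r * dotp v v.
Proof.
move=> r_ge0; apply: (le_trans (cauchy_schwarz _ _)).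
have := hsmooth (r *: v + x) x; rewrite addrK enormZ ger0_norm // -enorm_sqr.
by move=> /(ler_wpM2r (enorm_ge0 v)); rewrite -!mulrA -expr2.
Qed.

Lemma smooth_descent (x v : 'rV[R]_d) :
  f (v + x) <= f x + dotp (gradf x) v + beta / 2 * dotp v v.
Proof.
set c := dotp (gradf x) v; set n := dotp v v.
pose p : {poly R} := c *: 'X + (beta / 2 * n) *: 'X^2.
have pE s : p.[s] = c * s + beta / 2 * n * s ^+ 2 by rewrite !hornerE.
have p'E s : p^`().[s] = c + beta * n * s.
  by rewrite derivD !derivZ derivX derivXn !hornerE /=; field.
(* phi is nonincreasing on [0, 1]: by smoothness its derivative is nonpositive. *)
pose phi := (fun s : R => f (s *: v + x)) - horner p.
have dphi (s : R) : is_derive s (1 : R) phi (dotp (gradf (s *: v + x)) v - p^`().[s]).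
  apply: is_deriveB; exact: is_derive_along_line (hgrad _ v).
suff : phi 1 <= phi 0.
  have phiE s : phi s = f (s *: v + x) - p.[s] by [].
  by rewrite !phiE !pE scale1r scale0r add0r expr1n expr0n /= !mulr1 !mulr0; lra.
apply: (@ler0_derive1_le_cc R phi 0 1) => //=; last first.
- by rewrite in_itv /= lexx ler01.
- by rewrite in_itv /= lexx ler01.
- by apply: derivable_within_continuous => r _; have [] := dphi r.
move=> r; rewrite in_itv /= => /andP[r_gt0 _].
rewrite derive1E; have [_ ->] := dphi r.
rewrite p'E subr_le0 -lerBlDl -dotpBl.
by rewrite (le_trans (dotp_gradB_le _ _ (ltW r_gt0))) // mulrAC.
Qed.

End SmoothDescent.

Lemma sqrtrD_le (R : rcfType) (a b : R) : 0 <= a -> 0 <= b ->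
  Num.sqrt (a + b) <= Num.sqrt a + Num.sqrt b.
Proof.
move=> a_ge0 b_ge0; rewrite -ler_sqr ?nnegrE ?addr_ge0 ?sqrtr_ge0 //.
by rewrite sqrrD !sqr_sqrtr ?addr_ge0 // -addrA lerD2l lerDr mulrn_wge0 ?mulr_ge0 ?sqrtr_ge0.
Qed.

Lemma subr_sqr_le (R : realDomainType) (l u s : R) :
  0 <= l -> l <= u -> u <= s -> u ^+ 2 - l ^+ 2 <= 2 * s * (u - l).
Proof.
move=> l_ge0 lu us.
have -> : 2 * s * (u - l) = u ^+ 2 - l ^+ 2 + (u - l) * (2 * s - u - l) by ring.
by rewrite lerDl mulr_ge0 //; lra.
Qed.

Lemma abel_sum_le (R : realDomainType) (S D : nat -> R) (M : R) (n : nat) :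
  (forall t, S t <= S t.+1) -> (forall t, (0 < t <= n)%N -> D t <= M) ->
  \sum_(1 <= t < n.+1) S t * (D t - D t.+1)
    <= S 0%N * D 1%N + M * (S n - S 0%N) - S n * D n.+1.
Proof.
move=> S_incr; elim: n => [|n IHn] D_le; first by rewrite big_geq //; lra.
rewrite big_nat_recr //=.
have IH : \sum_(1 <= t < n.+1) S t * (D t - D t.+1)
    <= S 0%N * D 1%N + M * (S n - S 0%N) - S n * D n.+1.
  by apply: IHn => t /andP[t_gt0 t_le]; rewrite D_le // t_gt0 leqW.
have : (S n.+1 - S n) * D n.+1 <= (S n.+1 - S n) * M.
  by rewrite ler_wpM2l ?subr_ge0 ?D_le /=.
nra.
Qed.

Definition adasgd_sqsum (R : realType) (d : nat) (g : nat -> 'rV[R]_d) (t : nat) : R :=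
  \sum_(1 <= s < t.+1) enorm (g s) ^+ 2.

Definition adasgd_scale (R : realType) (d : nat) (gamma : R) (g : nat -> 'rV[R]_d)
    (t : nat) : R :=
  Num.sqrt (gamma ^+ 2 + adasgd_sqsum g t).

Section AdaSGDScale.
Variables (R : realType) (d : nat) (gamma : R) (g : nat -> 'rV[R]_d).
Hypothesis gamma_gt0 : 0 < gamma.
Local Notation G := (adasgd_sqsum g).
Local Notation S := (adasgd_scale gamma g).

Lemma adasgd_sqsum_ge0 t : 0 <= G t.
Proof. by apply: sumr_ge0 => s _; apply: sqr_ge0. Qed.

Lemma adasgd_sqsum0 : G 0%N = 0.
Proof. by rewrite /adasgd_sqsum big_geq. Qed.

Lemma adasgd_sqsumS t : G t.+1 = G t + enorm (g t.+1) ^+ 2.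
Proof. by rewrite /adasgd_sqsum big_nat_recr. Qed.

Lemma adasgd_scale0 : S 0%N = gamma.
Proof. by rewrite /adasgd_scale adasgd_sqsum0 addr0 sqrtr_sqr gtr0_norm. Qed.

Lemma adasgd_scale_gt0 t : 0 < S t.
Proof.
apply: (lt_le_trans gamma_gt0); rewrite -[leLHS]gtr0_norm // -sqrtr_sqr.
by rewrite ler_wsqrtr // lerDl adasgd_sqsum_ge0.
Qed.

Lemma adasgd_scale_incr t : S t <= S t.+1.
Proof. by rewrite ler_wsqrtr // adasgd_sqsumS addrA lerDl sqr_ge0. Qed.

Lemma sqrt_adasgd_sqsum_le t : Num.sqrt (G t) <= S t.
Proof. by rewrite ler_wsqrtr // lerDr sqr_ge0. Qed.

Lemma adasgd_scale_subr_le t : S t - gamma <= Num.sqrt (G t).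
Proof.
rewrite lerBlDl -[X in X + _]gtr0_norm // -sqrtr_sqr.
by rewrite sqrtrD_le ?sqr_ge0 ?adasgd_sqsum_ge0.
Qed.

Lemma adasgd_increment_le t :
  enorm (g t.+1) ^+ 2 <= 2 * S t.+1 * (Num.sqrt (G t.+1) - Num.sqrt (G t)).
Proof.
have -> : enorm (g t.+1) ^+ 2 = Num.sqrt (G t.+1) ^+ 2 - Num.sqrt (G t) ^+ 2.
  by rewrite !(sqr_sqrtr (adasgd_sqsum_ge0 _)) adasgd_sqsumS addrAC subrr add0r.
apply: subr_sqr_le; rewrite ?sqrtr_ge0 ?sqrt_adasgd_sqsum_le //.
by rewrite ler_wsqrtr // adasgd_sqsumS lerDl sqr_ge0.
Qed.

End AdaSGDScale.

Section AdaSGDStep.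
Variables (R : realType) (d : nat) (f : 'rV[R]_d -> R) (gradf : 'rV[R]_d -> 'rV[R]_d).
Variables (beta eta gamma : R) (w1 : 'rV[R]_d) (g : nat -> 'rV[R]_d).
Hypothesis hgrad : forall x v : 'rV[R]_d, is_derive x v f (dotp (gradf x) v).
Hypothesis hsmooth : forall x y : 'rV[R]_d,
  enorm (gradf x - gradf y) <= beta * enorm (x - y).
Hypotheses (eta_gt0 : 0 < eta) (gamma_gt0 : 0 < gamma).
Local Notation w := (adasgd_w eta gamma w1 g).
Local Notation G := (adasgd_sqsum g).
Local Notation S := (adasgd_scale gamma g).

Lemma adasgd_wS t : w t.+2 = - ((eta / S t.+1) *: g t.+1) + w t.+1.
Proof. by rewrite addrC. Qed.

Lemma adasgd_step_le t :
  dotp (gradf (w t.+1)) (g t.+1)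
    <= S t.+1 / eta * (f (w t.+1) - f (w t.+2))
       + eta * beta * (Num.sqrt (G t.+1) - Num.sqrt (G t)).
Proof.
set p := dotp _ _; set a := enorm (g t.+1) ^+ 2; set e := eta / S t.+1.
set du := Num.sqrt (G t.+1) - Num.sqrt (G t).
set f1 := f (w t.+1); set f2 := f (w t.+2).
have S_gt0 := adasgd_scale_gt0 g gamma_gt0 t.+1.
have e_gt0 : 0 < e by rewrite divr_gt0.
have descent : f2 <= f1 - e * p + beta / 2 * (e ^+ 2 * a).
  rewrite /f2 adasgd_wS.
  have := smooth_descent hgrad hsmooth (w t.+1) (- (e *: g t.+1)).
  rewrite -scaleNr dotpZr dotpZl dotpZr -enorm_sqr -/p -/a.
  by rewrite [- e * (- e * a)]mulrA mulrNN -expr2 mulNr.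
have beta_a_le : beta * a <= beta * (2 * S t.+1 * du).
  have [g0 | g_neq0] := eqVneq (enorm (g t.+1)) 0.
    by rewrite /du /a adasgd_sqsumS g0 expr0n /= addr0 subrr !mulr0.
  have beta_ge0 : 0 <= beta.
    have := smooth_coef_ge0 hsmooth (g t.+1).
    by rewrite pmulr_lge0 // lt_def g_neq0 enorm_ge0.
  by rewrite ler_wpM2l ?adasgd_increment_le.
have -> : eta = e * S t.+1 by rewrite /e divfK ?gt_eqF.
rewrite (_ : S t.+1 / (e * S t.+1) = e^-1); last by field; rewrite !gt_eqF.
rewrite -(ler_pM2l e_gt0) mulrDr mulrA mulfV ?gt_eqF // mul1r.
have := ler_wpM2l (_ : 0 <= e ^+ 2 / 2) beta_a_le.
by rewrite divr_ge0 ?sqr_ge0 //; nra.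
Qed.

Lemma adasgd_sum_le n :
  \sum_(1 <= t < n.+1) dotp (gradf (w t)) (g t)
    <= eta^-1 * \sum_(1 <= t < n.+1) S t * (f (w t) - f (w t.+1))
       + eta * beta * Num.sqrt (G n).
Proof.
rewrite !big_add1 /= mulr_sumr.
have -> : Num.sqrt (G n) = \sum_(0 <= t < n) (Num.sqrt (G t.+1) - Num.sqrt (G t)).
  by rewrite telescope_sumr // adasgd_sqsum0 sqrtr0 subr0.
rewrite mulr_sumr -big_split /=; apply: ler_sum => t _.
by rewrite mulrA [eta^-1 * _]mulrC adasgd_step_le.
Qed.

End AdaSGDStep.

Theorem lemma1 (R : realType) (d : nat)
  (f : 'rV[R]_d -> R) (gradf : 'rV[R]_d -> 'rV[R]_d) (beta fstar : R)
  (* gradf is the gradient of f *)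
  (hgrad : forall x v : 'rV[R]_d, is_derive x v f (dotp (gradf x) v))
  (* beta-smoothness w.r.t. the Euclidean norm *)
  (hsmooth : forall x y : 'rV[R]_d,
      enorm (gradf x - gradf y) <= beta * enorm (x - y))
  (* fstar is the minimum value of f *)
  (hmin_lb : forall x, fstar <= f x)
  (hmin_att : exists xs, f xs = fstar)
  (eta gamma : R) (heta : 0 < eta) (hgamma : 0 < gamma)
  (w1 : 'rV[R]_d) (g : nat -> 'rV[R]_d) (T : nat) :
  let w := adasgd_w eta gamma w1 g in
  let Delta1 := f (w 1%N) - fstar in
  let DeltaBar := \big[Num.max/f (w 1%N)]_(1 <= t < T.+1) f (w t) - fstar in
  \sum_(1 <= t < T.+1) dotp (gradf (w t)) (g t)
  <= gamma * Delta1 / eta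
     + (2 * DeltaBar / eta + eta * beta)
       * Num.sqrt (\sum_(1 <= t < T.+1) enorm (g t) ^+ 2).
Proof.
cbv zeta; set w := adasgd_w eta gamma w1 g.
set DeltaBar := \big[Num.max/_]_(_ <= t < _) _ - fstar; set Delta1 := f (w 1%N) - fstar.
rewrite -/(adasgd_sqsum g T); set sqrtG := Num.sqrt _; set S := adasgd_scale gamma g.
have Delta1_ge0 : 0 <= Delta1 by rewrite subr_ge0.
have DeltaBar_ge0 : 0 <= DeltaBar by rewrite (le_trans Delta1_ge0) // lerD2r bigmax_ge_id.
have D_le t : (0 < t <= T)%N -> f (w t) - fstar <= DeltaBar.
  by move=> t_in; rewrite lerD2r le_bigmax_seq // mem_index_iota ltnS.
have abel_le : \sum_(1 <= t < T.+1) S t * (f (w t) - f (w t.+1))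
    <= gamma * Delta1 + DeltaBar * sqrtG.
  have := abel_sum_le (D := fun t => f (w t) - fstar) (adasgd_scale_incr gamma g) D_le.
  rewrite adasgd_scale0 // -/S -/Delta1; under eq_bigr do rewrite opprB addrA subrK.
  move/le_trans; apply.
  have gap_le : DeltaBar * (S T - gamma) <= DeltaBar * sqrtG.
    exact/ler_wpM2l/adasgd_scale_subr_le.
  have last_ge0 : 0 <= S T * (f (w T.+1) - fstar).
    by rewrite mulr_ge0 ?subr_ge0 ?hmin_lb ?ltW ?adasgd_scale_gt0.
  lra.
apply: (le_trans (adasgd_sum_le w1 g hgrad hsmooth heta hgamma T)); rewrite -/w -/S -/sqrtG.
have eta_inv_ge0 : 0 <= eta^-1 by rewrite invr_ge0 ltW.
have := ler_wpM2l eta_inv_ge0 abel_le.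
have : 0 <= DeltaBar * sqrtG / eta by rewrite !mulr_ge0 ?sqrtr_ge0.
lra.
Qed.
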